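(* Let $W$ be a unitary $2\times2$ matrix with $\det W=1$ and $\operatorname{tr}W\ge 0$. Then for all unit scalars $\lambda\in\mathbb C$, $\|I-W\|\le\|I-\lambda W\|$.
   Context: $\|\cdot\|$ denotes the operator norm: $\|U\|=\sup\{\|Uv\| : v\in\mathbb C^2,\ \|v\|=1\}$. (For such $W$, $\operatorname{tr}W$ is real.) *)

From HB Require Import structures.
From mathcomp Require Import all_boot all_order all_algebra.
From mathcomp Require Import complex.
From mathcomp Require Import boolp classical_sets reals.
Set Implicit Arguments. Unset Strict Implicit. Unset Printing Implicit Defensive.
Import Order.TTheory GRing.Theory Num.Theory.
Local Open Scope ring_scope.
Local Open Scope classical_set_scope.

Definition vnorm (R : realType) (v : 'cV[R[i]]_2) : R :=
  Num.sqrt (\sum_(k < 2) (Normc.normc (v k 0)) ^+ 2).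

Definition opnorm (R : realType) (U : 'M[R[i]]_2) : R :=
  sup [set vnorm (U *m v) | v in [set v : 'cV[R[i]]_2 | vnorm v = 1]].

Definition adjmx (R : realType) (U : 'M[R[i]]_2) : 'M[R[i]]_2 :=
  (map_mx Num.conj U)^T.

Definition unitary2 (R : realType) (U : 'M[R[i]]_2) : Prop :=
  U *m adjmx U = 1%:M.

From HB Require Import structures.
From mathcomp Require Import all_boot all_order all_algebra.
From mathcomp Require Import complex.
From mathcomp Require Import boolp classical_sets reals.
From mathcomp Require Import ring lra.
Import Order.TTheory GRing.Theory Num.Theory.
Local Open Scope ring_scope.
Set Implicit Arguments. Unset Strict Implicit. Unset Printing Implicit Defensive.

(* Unitarity and det W = 1 force W = [[p, - conj r], [r, conj p]] with
   |p|^2 + |r|^2 = 1.  Then (I - W)^H (I - W) = (2 - 2 Re p) I, so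
   ||I - W|| <= sqrt (2 - 2 Re p).  For |l| = 1, the images of e_0 and e_1 under
   I - l W have squared norms 2 - 2 Re (l p) and 2 - 2 Re (l conj p), whose sum
   4 - 4 Re l Re p is at least 4 - 4 Re p because Re p = tr W / 2 >= 0; so one of
   them is at least 2 - 2 Re p. *)

Lemma ord2_lift0 : lift ord0 ord0 = 1 :> 'I_2.
Proof. exact: val_inj. Qed.

Lemma mxtrace2 (T : pzSemiRingType) (A : 'M[T]_2) : \tr A = A 0 0 + A 1 1.
Proof. by rewrite /mxtrace !big_ord_recl big_ord0 addr0 ord2_lift0. Qed.

Lemma adj_mx2E (T : comNzRingType) (A : 'M[T]_2) :
  \adj A 0 0 = A 1 1 /\ \adj A 0 1 = - A 0 1.
Proof.
rewrite !mxE /cofactor !det_mx11 !mxE /= expr0 expr1 mul1r mulN1r.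
have -> : lift 1 0 = 0 :> 'I_2 by exact: val_inj.
by rewrite ord2_lift0.
Qed.

Section SU2.
Variable R : realType.
Implicit Types (z l p r x y : R[i]) (v : 'cV[R[i]]_2) (U W : 'M[R[i]]_2).

Definition sqnormc z : R := complex.Re z ^+ 2 + complex.Im z ^+ 2.

Lemma sqnormc_ge0 z : 0 <= sqnormc z.
Proof. by rewrite addr_ge0 ?sqr_ge0. Qed.

Lemma normc_sqr z : Normc.normc z ^+ 2 = sqnormc z.
Proof. by case: z => a b; rewrite /= sqr_sqrtr // addr_ge0 ?sqr_ge0. Qed.

Lemma sqnormc_eq1 z : `|z| = 1 -> sqnormc z = 1.
Proof.
rewrite normc_def => /(congr1 (@complex.Re R)) /= z1.
by rewrite -(sqr_sqrtr (sqnormc_ge0 z)) [Num.sqrt _]z1 expr1n.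
Qed.

Lemma vnormE v : vnorm v = Num.sqrt (sqnormc (v 0 0) + sqnormc (v 1 0)).
Proof. by rewrite /vnorm !big_ord_recl big_ord0 addr0 !normc_sqr ord2_lift0. Qed.

Lemma vnorm_eq1 v : vnorm v = 1 -> sqnormc (v 0 0) + sqnormc (v 1 0) = 1.
Proof.
rewrite vnormE => v1.
by rewrite -(sqr_sqrtr (addr_ge0 (sqnormc_ge0 _) (sqnormc_ge0 _))) v1 expr1n.
Qed.

Lemma vnorm_delta k : vnorm (delta_mx k 0 : 'cV[R[i]]_2) = 1.
Proof.
rewrite vnormE !mxE; case: k => [[|[|//]] ?] /=;
  by rewrite /sqnormc /= expr1n !expr0n /= ?addr0 ?add0r sqrtr1.
Qed.

Lemma opnorm_le U c :
  (forall v, vnorm v = 1 -> vnorm (U *m v) <= c) -> opnorm U <= c.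
Proof.
move=> Uc; apply: ge_sup.
  by exists (vnorm (U *m delta_mx 0 0)), (delta_mx 0 0); first exact: vnorm_delta.
by move=> _ [v v1 <-]; exact: Uc.
Qed.

Lemma vnorm_le_opnorm U c v :
  (forall v, vnorm v = 1 -> vnorm (U *m v) <= c) ->
  vnorm v = 1 -> vnorm (U *m v) <= opnorm U.
Proof.
move=> Uc v1; apply: ub_le_sup; last by exists v.
by exists c => _ [w w1 <-]; exact: Uc.
Qed.

(* The squared norm of (I - l [[p, - conj r], [r, conj p]]) (x, y). *)
Definition su2_sqnorm l p r x y : R :=
  sqnormc ((1 - l * p) * x + l * (r^*)%C * y) +
  sqnormc (- (l * r) * x + (1 - l * (p^*)%C) * y).

Lemma su2_sqnorm_ge0 l p r x y : 0 <= su2_sqnorm l p r x y.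
Proof. by rewrite addr_ge0 ?sqnormc_ge0. Qed.

Lemma su2_sqnorm1 p r x y :
  su2_sqnorm 1 p r x y =
    (1 + (sqnormc p + sqnormc r) - 2 * complex.Re p) * (sqnormc x + sqnormc y).
Proof.
case: p r x y => [p1 p2] [r1 r2] [x1 x2] [y1 y2].
by rewrite /su2_sqnorm /sqnormc; simpc => /=; ring.
Qed.

Lemma su2_sqnormN l p r x y :
  su2_sqnorm l p r x y + su2_sqnorm (- l) p r x y =
    2 * (1 + sqnormc l * (sqnormc p + sqnormc r)) * (sqnormc x + sqnormc y).
Proof.
case: l p r x y => [l1 l2] [p1 p2] [r1 r2] [x1 x2] [y1 y2].
by rewrite /su2_sqnorm /sqnormc; simpc => /=; ring.
Qed.

Lemma su2_sqnorm_e0 l p r :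
  su2_sqnorm l p r 1 0 =
    1 + sqnormc l * (sqnormc p + sqnormc r) - 2 * complex.Re (l * p).
Proof.
case: l p r => [l1 l2] [p1 p2] [r1 r2].
by rewrite /su2_sqnorm /sqnormc; simpc => /=; ring.
Qed.

Lemma su2_sqnorm_e1 l p r :
  su2_sqnorm l p r 0 1 =
    1 + sqnormc l * (sqnormc p + sqnormc r) - 2 * complex.Re (l * (p^*)%C).
Proof.
case: l p r => [l1 l2] [p1 p2] [r1 r2].
by rewrite /su2_sqnorm /sqnormc; simpc => /=; ring.
Qed.

Lemma Re_mul_le_or_conj l p : sqnormc l = 1 -> 0 <= complex.Re p ->
  complex.Re (l * p) <= complex.Re p \/ complex.Re (l * (p^*)%C) <= complex.Re p.
Proof.
case: l p => [l1 l2] [p1 p2]; rewrite /sqnormc /= => l_unit p1_ge0.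
have l1_le1 : l1 <= 1 by nra.
by have [le0|gt0] := lerP (l2 * p2) 0; [right | left]; simpc => /=; nra.
Qed.

Lemma adj_unitary2 W : unitary2 W -> \det W = 1 -> \adj W = adjmx W.
Proof.
by move=> WU W1; rewrite -[\adj W]mulmx1 -WU mulmxA mul_adj_mx W1 mul1mx.
Qed.

Lemma unitary2_det1E W : unitary2 W -> \det W = 1 ->
  [/\ W 0 1 = - ((W 1 0)^*)%C, W 1 1 = ((W 0 0)^*)%C &
      sqnormc (W 0 0) + sqnormc (W 1 0) = 1].
Proof.
move=> WU W1; have [adj00 adj01] := adj_mx2E W.
rewrite adj_unitary2 // !mxE in adj00 adj01.
have W01 : W 0 1 = - ((W 1 0)^*)%C by rewrite -[W 0 1]opprK -adj01.
split=> //.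
have := congr1 (fun M : 'M_2 => complex.Re (M 0 0)) WU.
rewrite !mxE !big_ord_recl big_ord0 !mxE ord2_lift0 W01 /=.
by case: (W 0 0) (W 1 0) => [p1 p2] [r1 r2]; rewrite /sqnormc; simpc => /= <-; ring.
Qed.

Section SU2Matrix.
Variable W : 'M[R[i]]_2.
Hypotheses (W01 : W 0 1 = - ((W 1 0)^*)%C) (W11 : W 1 1 = ((W 0 0)^*)%C).
Hypothesis W_unit : sqnormc (W 0 0) + sqnormc (W 1 0) = 1.

Lemma vnorm_sub_scale_su2 l v :
  vnorm ((1%:M - l *: W) *m v) =
    Num.sqrt (su2_sqnorm l (W 0 0) (W 1 0) (v 0 0) (v 1 0)).
Proof.
rewrite vnormE !mxE !big_ord_recl big_ord0 !mxE /= big_ord0 ord2_lift0 W01 W11.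
by congr (Num.sqrt (sqnormc _ + sqnormc _)); ring.
Qed.

Lemma opnorm_sub_su2 : opnorm (1%:M - W) <= Num.sqrt (2 - 2 * complex.Re (W 0 0)).
Proof.
apply: opnorm_le => v v1; rewrite -[W in 1%:M - W]scale1r vnorm_sub_scale_su2.
by rewrite su2_sqnorm1 W_unit vnorm_eq1 // mulr1.
Qed.

Lemma vnorm_sub_scale_su2_le2 l : sqnormc l = 1 ->
  forall v, vnorm v = 1 -> vnorm ((1%:M - l *: W) *m v) <= 2.
Proof.
move=> l_unit v v1; rewrite vnorm_sub_scale_su2 -(@ger0_norm _ 2) // -sqrtr_sqr.
apply: ler_wsqrtr; have := su2_sqnormN l (W 0 0) (W 1 0) (v 0 0) (v 1 0).
rewrite l_unit W_unit vnorm_eq1 //.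
have := su2_sqnorm_ge0 (- l) (W 0 0) (W 1 0) (v 0 0) (v 1 0); lra.
Qed.

Lemma opnorm_sub_scale_su2_ge l : sqnormc l = 1 -> 0 <= complex.Re (W 0 0) ->
  Num.sqrt (2 - 2 * complex.Re (W 0 0)) <= opnorm (1%:M - l *: W).
Proof.
move=> l_unit Rep_ge0; have bound := vnorm_sub_scale_su2_le2 l_unit.
have [le_Re|le_Re] := Re_mul_le_or_conj l_unit Rep_ge0.
- apply: le_trans (vnorm_le_opnorm bound (vnorm_delta 0)).
  rewrite vnorm_sub_scale_su2 !mxE /= su2_sqnorm_e0 l_unit W_unit mulr1.
  by apply: ler_wsqrtr; lra.
- apply: le_trans (vnorm_le_opnorm bound (vnorm_delta 1)).
  rewrite vnorm_sub_scale_su2 !mxE /= su2_sqnorm_e1 l_unit W_unit mulr1.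
  by apply: ler_wsqrtr; lra.
Qed.

End SU2Matrix.

End SU2.

Theorem lemma7p17 (R : realType) (W : 'M[R[i]]_2) :
  unitary2 W -> \det W = 1 -> 0 <= \tr W ->
  forall lambda : R[i], `|lambda| = 1 ->
    opnorm (1%:M - W) <= opnorm (1%:M - lambda *: W).
Proof.
move=> WU W1 trW_ge0 l /sqnormc_eq1 l_unit.
have [W01 W11 W_unit] := unitary2_det1E WU W1.
have Rep_ge0 : 0 <= complex.Re (W 0 0).
  move: trW_ge0; rewrite mxtrace2 W11 lecE => /andP[_].
  by case: (W 0 0) => p1 p2 /=; lra.
apply: le_trans (opnorm_sub_su2 W01 W11 W_unit) _.
exact: opnorm_sub_scale_su2_ge.
Qed.
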